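(* Let $G$ be a locally finite connected graph and $\overline{T}$ a spanning topological caterpillar of $G$. Let $v,w\in V(G)$ with $V_v\le_T V_w$. Then for any two vertices $x,y$ with $V_v<_T V_x<_T V_w$ and $V_v<_T V_y<_T V_w$ there exists a finite $x$–$y$ path in the induced subgraph $G[I_{vw}]$, where $I_{vw}=\bigcup\{V_u : V_v\le_T V_u\le_T V_w\}$.
   Context: All graphs are simple. For a locally finite connected graph $G$, $|G|$ is the Freudenthal compactification (the 1-complex $G$ plus its ends, i.e. classes of rays not separable by finitely many vertices, with the standard topology). An arc is a homeomorphic image of $[0,1]$ in $|G|$, a circle one of $S^1$; $\overline{F}$ is the closure in $|G|$ of a subgraph $F$. A topological caterpillar is a circle-free arc-connected closure $\overline{T}$ of a forest $T\subseteq G$ such that $\overline{T-L}$ is an arc $A$, where $L$ is the set of vertices of degree $1$ in $T$; it is spanning if $V(T)=V(G)$. The arc $A$ induces a linear order $<_A$ on $V(T)\setminus L$. For $<_A$-consecutive $v'<_A w'$ in $V(T)\setminus L$ put $P_{w'}=\{w'\}\cup(N_T(v')\cap L)$; if $<_A$ has a maximum $m$ put $P^+=N_T(m)\cap L$; if it has a minimum $s$ put $P^-=\{s\}$. These sets form a partition $\mathcal{P}_T$ of $V(T)$, and $V_u$ denotes the class containing $u$. The linear order $<_T$ on $\mathcal{P}_T$ is given by $V_{v'}<_T V_{w'}$ whenever $v',w'\in V(T)\setminus L$ with $v'<_A w'$, together with $P^-<_T P<_T P^+$ for all other classes $P$. *)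

From Stdlib Require Import Reals List.
Import ListNotations.
Open Scope R_scope.

Set Implicit Arguments.
Unset Strict Implicit.

Section Graphs.
Variable V : Type.
Variable adj : V -> V -> Prop.

Definition simple_graph : Prop :=
  (forall u v, adj u v -> adj v u) /\ (forall v, ~ adj v v).

Definition locally_finite : Prop :=
  forall v, exists l : list V, forall w, adj v w -> In w l.

Fixpoint walk (E : V -> V -> Prop) (x : V) (l : list V) : Prop :=
  match l with
  | [] => True
  | y :: l' => E x y /\ walk E y l'
  end.

Definition graph_connected : Prop :=
  forall x y, exists l, walk adj x l /\ last l x = y.

Definition conn_avoid (S : list V) (a b : V) : Prop :=
  ~ In a S /\ exists l, walk adj a l /\ last l a = b /\
                        forall z, In z l -> ~ In z S.

Definition is_ray (r : nat -> V) : Prop :=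
  (forall n m, r n = r m -> n = m) /\ (forall n, adj (r n) (r (S n))).

Definition equiv_rays (r r' : nat -> V) : Prop :=
  forall Sf : list V, exists N, forall n m, (N <= n)%nat -> (N <= m)%nat ->
    conn_avoid Sf (r n) (r' m).

Definition is_end (E : (nat -> V) -> Prop) : Prop :=
  exists r, is_ray r /\ forall r', E r' <-> (is_ray r' /\ equiv_rays r r').

(** A point of the 1-complex G is given by its barycentric weight function
    f : V -> R (a vertex v is the indicator of v; an inner point of the edge uv
    has weights 1-t at u and t at v, 0<t<1). *)
Inductive point : Type :=
  | Cpx : (V -> R) -> point
  | Endp : ((nat -> V) -> Prop) -> point.

Definition is_vertex_fun (f : V -> R) (v : V) : Prop :=
  f v = 1 /\ forall w, w <> v -> f w = 0.

Definition inner_of (f : V -> R) (u v : V) : Prop :=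
  adj u v /\ 0 < f u < 1 /\ f v = 1 - f u /\
  forall w, w <> u -> w <> v -> f w = 0.

Definition is_cpx (f : V -> R) : Prop :=
  (exists v, is_vertex_fun f v) \/ (exists u v, inner_of f u v).

Definition valid (p : point) : Prop :=
  match p with
  | Cpx f => is_cpx f
  | Endp E => is_end E
  end.

Definition vtx_at (p : point) (v : V) : Prop :=
  exists f, p = Cpx f /\ is_vertex_fun f v.

(** v lies in C(S, E): the component of G - S containing a tail of
    (every) ray of the end E *)
Definition inC (Sf : list V) (E : (nat -> V) -> Prop) (v : V) : Prop :=
  exists r, E r /\ exists N, forall n, (N <= n)%nat -> conn_avoid Sf v (r n).

(** p lies in \hat C(S, E) = C(S,E) u Omega(S,E) u (inner points of S-C edges) *)
Definition inChat (Sf : list V) (E : (nat -> V) -> Prop) (p : point) : Prop :=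
  match p with
  | Cpx f => exists v, f v <> 0 /\ inC Sf E v
  | Endp E' => exists r', E' r' /\ exists N, forall n, (N <= n)%nat ->
                 inC Sf E (r' n)
  end.

(** Basic neighbourhoods of a point of |G| (a neighbourhood base of the
    standard topology, G locally finite): small balls (edges of length 1)
    around points of the 1-complex, and the sets \hat C(S, w) around ends. *)
Definition basic_nbhd (p : point) (N : point -> Prop) : Prop :=
  match p with
  | Cpx f => exists eps, 0 < eps /\
      forall q, N q <-> (valid q /\ exists g, q = Cpx g /\
                                    forall w, Rabs (g w - f w) < eps)
  | Endp E => exists Sf : list V, forall q, N q <-> (valid q /\ inChat Sf E q)
  end.

Definition homeo_onto (X : Type) (D : X -> Prop) (d : X -> X -> R)
  (alpha : X -> point) (A : point -> Prop) : Prop :=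
  (forall x, D x -> valid (alpha x)) /\
  (forall p, A p <-> exists x, D x /\ alpha x = p) /\
  (forall x y, D x -> D y -> alpha x = alpha y -> x = y) /\
  (forall x, D x -> forall N, basic_nbhd (alpha x) N ->
     exists delta, 0 < delta /\ forall y, D y -> d x y < delta -> N (alpha y)) /\
  (forall x, D x -> forall eps, 0 < eps ->
     exists N, basic_nbhd (alpha x) N /\
       forall y, D y -> N (alpha y) -> d x y < eps).

Definition unit_interval (t : R) : Prop := 0 <= t <= 1.

Definition arc_param (alpha : R -> point) (A : point -> Prop) : Prop :=
  homeo_onto unit_interval (fun s t => Rabs (s - t)) alpha A.

Definition is_arc (A : point -> Prop) : Prop := exists alpha, arc_param alpha A.

Definition unit_circle (z : R * R) : Prop := fst z ^ 2 + snd z ^ 2 = 1.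

Definition is_circle (C : point -> Prop) : Prop :=
  exists alpha : R * R -> point,
    homeo_onto unit_circle
      (fun z z' => sqrt ((fst z - fst z') ^ 2 + (snd z - snd z') ^ 2)) alpha C.

Definition in_sub (HV : V -> Prop) (HE : V -> V -> Prop) (p : point) : Prop :=
  (exists v, HV v /\ vtx_at p v) \/
  (exists f u v, p = Cpx f /\ HE u v /\ inner_of f u v).

Definition closure (P : point -> Prop) (p : point) : Prop :=
  valid p /\ forall N, basic_nbhd p N -> exists q, N q /\ P q.

Definition arc_connected (X : point -> Prop) : Prop :=
  forall p q, X p -> X q -> p <> q ->
    exists alpha A, arc_param alpha A /\ alpha 0 = p /\ alpha 1 = q /\
                    forall z, A z -> X z.

Definition circle_free (X : point -> Prop) : Prop :=
  forall C, is_circle C -> ~ (forall z, C z -> X z).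

Definition subgraph (tV : V -> Prop) (tE : V -> V -> Prop) : Prop :=
  (forall u v, tE u v -> tE v u) /\ (forall u v, tE u v -> adj u v) /\
  (forall u v, tE u v -> tV u).

Definition acyclic (tE : V -> V -> Prop) : Prop :=
  forall x l, walk tE x l -> last l x = x -> (3 <= length l)%nat -> NoDup l -> False.

Definition forest (tV : V -> Prop) (tE : V -> V -> Prop) : Prop :=
  subgraph tV tE /\ acyclic tE.

Definition leaf (tV : V -> Prop) (tE : V -> V -> Prop) (v : V) : Prop :=
  tV v /\ exists u, tE v u /\ forall w, tE v w -> w = u.

Definition TmL_V (tV : V -> Prop) (tE : V -> V -> Prop) (v : V) : Prop :=
  tV v /\ ~ leaf tV tE v.
Definition TmL_E (tV : V -> Prop) (tE : V -> V -> Prop) (u v : V) : Prop :=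
  tE u v /\ ~ leaf tV tE u /\ ~ leaf tV tE v.

Definition top_caterpillar (tV : V -> Prop) (tE : V -> V -> Prop) : Prop :=
  forest tV tE /\
  circle_free (closure (in_sub tV tE)) /\
  arc_connected (closure (in_sub tV tE)) /\
  is_arc (closure (in_sub (TmL_V tV tE) (TmL_E tV tE))).

Definition spanning_top_caterpillar (tV : V -> Prop) (tE : V -> V -> Prop) : Prop :=
  top_caterpillar tV tE /\ forall v, tV v.

(** * The order <_A and the partition P_T.
    alpha is a (fixed, arbitrary) parametrisation of the arc A = closure(T-L);
    it fixes the orientation of A. *)
Definition posA (alpha : R -> point) (v : V) (t : R) : Prop :=
  unit_interval t /\ vtx_at (alpha t) v.

Definition ltA (alpha : R -> point) (v w : V) : Prop :=
  exists s t, posA alpha v s /\ posA alpha w t /\ s < t.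

Definition consecA tV tE alpha (v' w' : V) : Prop :=
  TmL_V tV tE v' /\ TmL_V tV tE w' /\ ltA alpha v' w' /\
  ~ (exists u, TmL_V tV tE u /\ ltA alpha v' u /\ ltA alpha u w').

Definition is_minA tV tE alpha (s : V) : Prop :=
  TmL_V tV tE s /\ forall u, TmL_V tV tE u -> u <> s -> ltA alpha s u.
Definition is_maxA tV tE alpha (m : V) : Prop :=
  TmL_V tV tE m /\ forall u, TmL_V tV tE u -> u <> m -> ltA alpha u m.

(** Classes of P_T are indexed by keys: [Some w'] stands for P_{w'}
    (w' having a <_A-predecessor) or for P^- = {s} (w' = s the minimum);
    [None] stands for P^+. [cls u k]: u belongs to the class with key k. *)
Definition cls tV tE alpha (u : V) (k : option V) : Prop :=
  match k with
  | Some w' => (exists v', consecA tV tE alpha v' w' /\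
                  (u = w' \/ (leaf tV tE u /\ tE v' u)))
               \/ (is_minA tV tE alpha w' /\ u = w')
  | None => exists m, is_maxA tV tE alpha m /\ leaf tV tE u /\ tE m u
  end.

Definition key_lt alpha (k k' : option V) : Prop :=
  match k, k' with
  | Some a, Some b => ltA alpha a b
  | Some _, None => True
  | None, _ => False
  end.

Definition key_le alpha (k k' : option V) : Prop := k = k' \/ key_lt alpha k k'.

End Graphs.

(* The vertices x and y are first joined inside I_vw to spine vertices whose positions on the
   arc A lie between the positions of the spine vertices c and d of the two bounding classes (a
   leaf is adjacent to the spine vertex from which its class is formed).  Between two such
   positions we sweep along A by real induction, with the invariant that every point passed is
   touched by the set X of vertices reachable from the start inside I_vw: a point of the
   1-complex has a vertex of X in its support, an end w has vertices of X in every C(S, w).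
   Vertices and inner edge points pass the invariant on by continuity of A.  An end strictly
   between c and d has a neighbourhood C(S, w) whose vertices all lie in I_vw: by compactness
   finitely many vertices separate w from the two outer pieces of A, and adding their
   neighbours also keeps out the leaves hanging on those pieces.  Being connected, C(S, w) is
   absorbed into X as soon as it meets X.  The local analysis near a vertex rests on the fact
   that an arc cannot start inside an edge all of whose inner points it contains, so that A
   runs from each spine vertex to the next one through a single edge. *)

From Stdlib Require Import Reals List Lra Lia.
From Stdlib Require Import Classical ClassicalEpsilon FunctionalExtensionality PropExtensionality.
Import ListNotations.
Open Scope R_scope.
Set Implicit Arguments.
Unset Strict Implicit.

Lemma real_induction (P : R -> Prop) a b : a <= b -> P a ->
  (forall t, a <= t <= b -> (forall s, a <= s < t -> P s) ->
     exists d, 0 < d /\ forall s, t <= s < t + d -> s <= b -> P s) ->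
  forall s, a <= s <= b -> P s.
Proof.
  intros Hab Pa Hstep.
  set (E := fun x => a <= x <= b /\ forall s, a <= s <= x -> P s).
  assert (Ea : E a).
  { split; [lra|]. intros s Hs. replace s with a by lra. exact Pa. }
  destruct (completeness E) as [m [Hub Hlub]].
  { exists b. intros x [Hx _]. lra. }
  { exists a. exact Ea. }
  assert (Ham : a <= m) by exact (Hub a Ea).
  assert (Hmb : m <= b) by (apply Hlub; intros x [Hx _]; lra).
  assert (Hbelow : forall s, a <= s < m -> P s).
  { intros s Hs. apply NNPP. intro Hn. enough (m <= s) by lra.
    apply Hlub. intros x [Hx HPx]. apply Rnot_lt_le. intro Hsx. apply Hn, HPx. lra. }
  destruct (Hstep m (conj Ham Hmb) Hbelow) as [d [Hd Hright]].
  set (m' := Rmin b (m + d / 2)).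
  assert (Hm'b : m' <= b) by apply Rmin_l.
  assert (Hm'd : m' <= m + d / 2) by apply Rmin_r.
  assert (Hupto : forall s, a <= s <= m' -> P s).
  { intros s Hs. destruct (Rlt_dec s m); [apply Hbelow; lra|]. apply Hright; lra. }
  assert (Hm'm : m' <= m).
  { apply Hub. split; [|exact Hupto]. split; [|exact Hm'b].
    apply Rmin_glb; lra. }
  assert (Hbm : m' = b).
  { unfold m', Rmin in *. destruct (Rle_dec b (m + d / 2)); lra. }
  intros s Hs. apply Hupto. lra.
Qed.

Lemma Rabs_lt_between (x y e : R) : Rabs (x - y) < e <-> y - e < x < y + e.
Proof. split; [intro H; apply Rabs_def2 in H | intro H; apply Rabs_def1]; lra. Qed.

Lemma exists_left_near (lo t d : R) : lo < t -> 0 < d -> exists s, lo <= s < t /\ t - s < d.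
Proof.
  intros Hlo Hd. exists (Rmax lo (t - d / 2)).
  pose proof (Rmax_l lo (t - d / 2)). pose proof (Rmax_r lo (t - d / 2)).
  assert (Rmax lo (t - d / 2) < t) by (apply Rmax_lub_lt; lra). lra.
Qed.

Definition cont_on (f : R -> R) a b := forall t, a <= t <= b -> forall eps, 0 < eps ->
  exists d, 0 < d /\ forall s, a <= s <= b -> Rabs (t - s) < d -> Rabs (f s - f t) < eps.

Lemma IVT_cont_on f a b y : a <= b -> cont_on f a b -> f a < y -> y < f b ->
  exists c, a <= c <= b /\ f c = y.
Proof.
  intros Hab Hf Ha Hb. apply NNPP. intro Hnone.
  enough (Hbelow : forall s, a <= s <= b -> f s < y) by (specialize (Hbelow b); lra).
  apply real_induction; [exact Hab | exact Ha |].
  intros t Ht Hleft.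
  assert (Hft : f t < y).
  { apply Rnot_le_lt. intro Hge. destruct (Req_dec (f t) y) as [Heq|Hne].
    { apply Hnone. exists t. auto. }
    destruct (Req_dec t a) as [->|Hta]; [lra|].
    destruct (Hf t Ht (f t - y)) as [d [Hd Hnear]]; [lra|].
    destruct (exists_left_near (lo := a) (t := t) ltac:(lra) Hd) as [s [Hs Hts]].
    specialize (Hleft s Hs).
    specialize (Hnear s ltac:(lra) ltac:(apply Rabs_lt_between; lra)).
    apply Rabs_lt_between in Hnear. lra. }
  destruct (Hf t Ht (y - f t)) as [d [Hd Hnear]]; [lra|].
  exists d. split; [exact Hd|]. intros s Hs Hsb.
  specialize (Hnear s ltac:(lra) ltac:(apply Rabs_lt_between; lra)).
  apply Rabs_lt_between in Hnear. lra.
Qed.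

Lemma IVT_cont_on_down f a b y : a <= b -> cont_on f a b -> y < f a -> f b < y ->
  exists c, a <= c <= b /\ f c = y.
Proof.
  intros Hab Hf Ha Hb.
  destruct (@IVT_cont_on (fun x => - f x) a b (- y)) as [c [Hc Hfc]]; try lra.
  - intros t Ht eps Heps. destruct (Hf t Ht eps Heps) as [d [Hd Hnear]].
    exists d. split; [exact Hd|]. intros s Hs Hts.
    replace (- f s - - f t) with (- (f s - f t)) by ring. rewrite Rabs_Ropp. auto.
  - exists c. split; [exact Hc | lra].
Qed.

Section Graph.
Variable V : Type.
Variable adj : V -> V -> Prop.
Hypothesis adj_sym : forall u v, adj u v -> adj v u.
Hypothesis adj_irrefl : forall v, ~ adj v v.
Implicit Types (f g : V -> R) (u v w z a b : V).

Lemma adj_neq u v : adj u v -> u <> v.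
Proof. intros H ->. exact (adj_irrefl H). Qed.

Lemma inner_of_sym f u v : inner_of adj f u v -> inner_of adj f v u.
Proof. intros [Huv [Hu [Hv Hrest]]]. repeat split; auto; lra. Qed.

Lemma inner_of_pos f u v : inner_of adj f u v -> 0 < f u /\ 0 < f v.
Proof. intros [_ [Hu [Hv _]]]. lra. Qed.

Lemma vertex_fun_supp f v z : is_vertex_fun f v -> f z <> 0 -> z = v.
Proof. intros [_ Hrest] Hz. apply NNPP. intro Hne. exact (Hz (Hrest z Hne)). Qed.

Lemma inner_of_supp f u v z : inner_of adj f u v -> f z <> 0 -> z = u \/ z = v.
Proof.
  intros [_ [_ [_ Hrest]]] Hz. apply NNPP. intro Hne.
  apply Hz, Hrest; intro; subst; tauto.
Qed.

Lemma vertex_fun_eq f g v : is_vertex_fun f v -> is_vertex_fun g v -> f = g.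
Proof.
  intros [Hf1 Hf] [Hg1 Hg]. apply functional_extensionality. intro w.
  destruct (classic (w = v)) as [->|Hne]; [lra | rewrite Hf, Hg; auto].
Qed.

Lemma inner_of_eq f g u v : inner_of adj f u v -> inner_of adj g u v -> f u = g u -> f = g.
Proof.
  intros [_ [_ [Hfv Hf]]] [_ [_ [Hgv Hg]]] Hu. apply functional_extensionality. intro w.
  destruct (classic (w = u)) as [->|Hwu]; [exact Hu|].
  destruct (classic (w = v)) as [->|Hwv]; [lra | rewrite Hf, Hg; auto].
Qed.

Lemma cpx_supp_nonempty g : is_cpx adj g -> exists w, g w <> 0.
Proof.
  intros [[v [Hv _]]|[u [v Huv]]]; [exists v; lra|].
  exists u. pose proof (inner_of_pos Huv). lra.
Qed.

Lemma cpx_supp_list g : is_cpx adj g -> exists S, forall w, g w <> 0 -> In w S.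
Proof.
  intros [[v Hv]|[u [v Huv]]].
  - exists [v]. intros w Hw. rewrite (vertex_fun_supp Hv Hw). now left.
  - exists [u; v]. intros w Hw. destruct (inner_of_supp Huv Hw) as [->| ->]; simpl; auto.
Qed.

Lemma cpx_inner_of g a b : is_cpx adj g -> g a <> 0 -> g b <> 0 -> a <> b -> inner_of adj g a b.
Proof.
  intros [[v Hv]|[u [v Huv]]] Ha Hb Hab.
  - rewrite (vertex_fun_supp Hv Ha), (vertex_fun_supp Hv Hb) in Hab. congruence.
  - destruct (inner_of_supp Huv Ha) as [->| ->], (inner_of_supp Huv Hb) as [->| ->];
      auto using inner_of_sym; congruence.
Qed.

Lemma cpx_edge_at g u : is_cpx adj g -> g u <> 0 -> ~ is_vertex_fun g u ->
  exists z, inner_of adj g u z.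
Proof.
  intros [[v Hv]|[a [b Hab]]] Hu Hnv.
  - rewrite (vertex_fun_supp Hv Hu) in Hnv. contradiction.
  - destruct (inner_of_supp Hab Hu) as [->| ->]; eauto using inner_of_sym.
Qed.

Lemma cpx_supp_pair g u z : is_cpx adj g -> (forall w, g w <> 0 -> In w [u; z]) ->
  ~ is_vertex_fun g u -> ~ is_vertex_fun g z -> inner_of adj g u z.
Proof.
  intros [[v Hv]|[a [b Hab]]] Hsupp Hu Hz.
  - exfalso. destruct (Hsupp v ltac:(destruct Hv; lra)) as [<-|[<-|[]]]; contradiction.
  - pose proof (inner_of_pos Hab) as [Pa Pb]. pose proof (adj_neq (proj1 Hab)).
    destruct (Hsupp a ltac:(lra)) as [<-|[<-|[]]], (Hsupp b ltac:(lra)) as [<-|[<-|[]]];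
      auto using inner_of_sym; congruence.
Qed.

Definition vertex_weights v : V -> R :=
  fun w => if excluded_middle_informative (w = v) then 1 else 0.

Lemma vertex_weights_vertex v : is_vertex_fun (vertex_weights v) v.
Proof.
  unfold vertex_weights. split.
  - destruct (excluded_middle_informative (v = v)); congruence.
  - intros w Hw. destruct (excluded_middle_informative (w = v)); congruence.
Qed.

Definition edge_weights u v (lam : R) : V -> R := fun w =>
  if excluded_middle_informative (w = u) then lam else
  if excluded_middle_informative (w = v) then 1 - lam else 0.

Lemma edge_weights_inner u v lam : adj u v -> 0 < lam < 1 ->
  inner_of adj (edge_weights u v lam) u v.
Proof.
  intros Huv Hlam. pose proof (adj_neq Huv) as Hne. unfold edge_weights. split; [exact Huv|].
  destruct (excluded_middle_informative (u = u)); [|congruence].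
  destruct (excluded_middle_informative (v = u)); [congruence|].
  destruct (excluded_middle_informative (v = v)); [|congruence].
  repeat split; try lra.
  intros w Hwu Hwv.
  destruct (excluded_middle_informative (w = u)); [congruence|].
  destruct (excluded_middle_informative (w = v)); congruence.
Qed.

Lemma edge_weights_at u v lam : edge_weights u v lam u = lam.
Proof. unfold edge_weights. destruct (excluded_middle_informative (u = u)); congruence. Qed.

Lemma vertex_fun_not_inner f v a b : is_vertex_fun f v -> inner_of adj f a b -> False.
Proof.
  intros Hv Hab. pose proof (inner_of_pos Hab) as [Ha Hb].
  assert (a = v) by (apply (vertex_fun_supp Hv); lra).
  assert (b = v) by (apply (vertex_fun_supp Hv); lra).
  subst. exact (adj_irrefl (proj1 Hab)).
Qed.

Lemma edge_weights_near f u v lam w : inner_of adj f u v ->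
  Rabs (edge_weights u v lam w - f w) <= Rabs (lam - f u).
Proof.
  intros [Huv [_ [Hfv Hf]]]. pose proof (adj_neq Huv) as Hne. unfold edge_weights.
  destruct (excluded_middle_informative (w = u)) as [->|Hwu]; [lra|].
  destruct (excluded_middle_informative (w = v)) as [->|Hwv].
  - rewrite Hfv. replace (1 - lam - (1 - f u)) with (- (lam - f u)) by ring.
    rewrite Rabs_Ropp. lra.
  - rewrite Hf by assumption. rewrite Rminus_0_r, Rabs_R0. apply Rabs_pos.
Qed.

Inductive reach (P : V -> Prop) : V -> V -> Prop :=
| reach_refl a : P a -> reach P a a
| reach_step a b c : P a -> adj a b -> reach P b c -> reach P a c.

Lemma last_cons (y : V) l d : last (y :: l) d = last l y.
Proof.
  revert y d. induction l as [|x l IH]; intros y d; [reflexivity|].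
  change (last (x :: l) d = last (x :: l) y). now rewrite !IH.
Qed.

Lemma walk_reach P a l : walk adj a l -> (forall z, In z (a :: l) -> P z) ->
  reach P a (last l a).
Proof.
  revert a. induction l as [|y l IH]; intros a Hw HP.
  - apply reach_refl, HP. now left.
  - destruct Hw as [Hay Hw]. rewrite last_cons.
    apply reach_step with y; [apply HP; now left | exact Hay |].
    apply IH; [exact Hw|]. intros z Hz. apply HP. now right.
Qed.

Lemma reach_walk P a b : reach P a b ->
  exists l, walk adj a l /\ last l a = b /\ forall z, In z (a :: l) -> P z.
Proof.
  induction 1 as [a Ha|a b c Ha Hab _ [l [Hw [Hl HP]]]].
  - exists []. repeat split. intros z [->|[]]. exact Ha.
  - exists (b :: l). repeat split; auto.
    + now rewrite last_cons.
    + intros z [->|Hz]; auto.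
Qed.

Lemma reach_inl P a b : reach P a b -> P a.
Proof. now destruct 1. Qed.

Lemma reach_inr P a b : reach P a b -> P b.
Proof. induction 1; auto. Qed.

Lemma reach_trans P a b c : reach P a b -> reach P b c -> reach P a c.
Proof. induction 1; intros; [assumption | eapply reach_step; eauto]. Qed.

Lemma reach_snoc P a b c : reach P a b -> adj b c -> P c -> reach P a c.
Proof.
  intros Hab Hbc Hc. apply (reach_trans Hab).
  apply reach_step with c; [exact (reach_inr Hab) | exact Hbc | now apply reach_refl].
Qed.

Lemma reach_sym P a b : reach P a b -> reach P b a.
Proof.
  induction 1 as [a Ha|a b c Ha Hab _ IH]; [now apply reach_refl|].
  eapply reach_snoc; eauto.
Qed.

Lemma reach_mono (P Q : V -> Prop) a b : (forall z, P z -> Q z) -> reach P a b -> reach Q a b.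
Proof. intros HPQ. induction 1; [apply reach_refl | eapply reach_step]; eauto. Qed.

Lemma reach_closed P Q a b : reach P a b -> (forall z, reach P a z -> Q z) -> reach Q a b.
Proof.
  induction 1 as [a Ha|a b c Ha Hab Hbc IH]; intros HQ.
  - apply reach_refl, HQ, reach_refl, Ha.
  - apply reach_step with b; [apply HQ, reach_refl, Ha | exact Hab |].
    apply IH. intros z Hz. apply HQ. eapply reach_step; eauto.
Qed.

Lemma reach_spread (X P : V -> Prop) a b : (forall a b, X a -> adj a b -> P b -> X b) ->
  X a -> reach P a b -> X b.
Proof.
  intros HX Ha Hab. induction Hab as [a|a b c _ Hab Hbc IH]; [exact Ha|].
  apply IH. exact (HX a b Ha Hab (reach_inl Hbc)).
Qed.

Lemma conn_avoid_reach S a b : conn_avoid adj S a b <-> reach (fun z => ~ In z S) a b.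
Proof.
  split.
  - intros [Ha [l [Hw [Hl HS]]]]. rewrite <- Hl. apply walk_reach; [exact Hw|].
    intros z [<-|Hz]; auto.
  - intro H. destruct (reach_walk H) as [l [Hw [Hl HS]]].
    split; [exact (reach_inl H)|]. exists l. repeat split; auto.
    intros z Hz. apply HS. now right.
Qed.

Implicit Types (S : list V) (E : (nat -> V) -> Prop) (r : nat -> V).

Lemma conn_avoid_sym S a b : conn_avoid adj S a b -> conn_avoid adj S b a.
Proof. rewrite !conn_avoid_reach. apply reach_sym. Qed.

Lemma conn_avoid_trans S a b c :
  conn_avoid adj S a b -> conn_avoid adj S b c -> conn_avoid adj S a c.
Proof. rewrite !conn_avoid_reach. apply reach_trans. Qed.

Lemma conn_avoid_mono S1 S2 a b : incl S1 S2 -> conn_avoid adj S2 a b -> conn_avoid adj S1 a b.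
Proof.
  intros Hincl. rewrite !conn_avoid_reach. apply reach_mono.
  intros z Hz Hz1. exact (Hz (Hincl z Hz1)).
Qed.

Lemma equiv_rays_sym r r' : equiv_rays adj r r' -> equiv_rays adj r' r.
Proof.
  intros H S. destruct (H S) as [N HN]. exists N. intros n m Hn Hm.
  apply conn_avoid_sym, HN; assumption.
Qed.

Lemma equiv_rays_trans r1 r2 r3 :
  equiv_rays adj r1 r2 -> equiv_rays adj r2 r3 -> equiv_rays adj r1 r3.
Proof.
  intros H12 H23 S. destruct (H12 S) as [N1 HN1], (H23 S) as [N2 HN2].
  exists (Nat.max N1 N2). intros n m Hn Hm.
  apply conn_avoid_trans with (r2 (Nat.max N1 N2)); [apply HN1 | apply HN2]; lia.
Qed.

Lemma end_ray E r : is_end adj E -> E r -> is_ray adj r.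
Proof. intros [r0 [_ HE]] Er. apply HE in Er. tauto. Qed.

Lemma end_equiv E r r' : is_end adj E -> E r -> E r' -> equiv_rays adj r r'.
Proof.
  intros [r0 [_ HE]] Er Er'. apply HE in Er as [_ Er], Er' as [_ Er'].
  exact (equiv_rays_trans (equiv_rays_sym Er) Er').
Qed.

Lemma ray_eventually_avoids r S : is_ray adj r -> exists N, forall n, (N <= n)%nat -> ~ In (r n) S.
Proof.
  intros [Hinj _]. induction S as [|x S [N HN]].
  - exists 0%nat. intros n _ [].
  - destruct (classic (exists k, r k = x)) as [[k <-]|Hnone].
    + exists (Nat.max N (k + 1)). intros n Hn [Hx|Hx].
      * apply Hinj in Hx. lia.
      * apply (HN n); [lia | exact Hx].
    + exists N. intros n Hn [Hx|Hx]; [apply Hnone; eauto | exact (HN n Hn Hx)].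
Qed.

Lemma ray_tail_conn r S : is_ray adj r ->
  exists N, forall n m, (N <= n)%nat -> (N <= m)%nat -> conn_avoid adj S (r n) (r m).
Proof.
  intros Hr. destruct (ray_eventually_avoids S Hr) as [N HN]. exists N.
  assert (Hup : forall k n, (N <= n)%nat -> reach (fun z => ~ In z S) (r n) (r (n + k)%nat)).
  { induction k as [|k IH]; intros n Hn.
    - rewrite Nat.add_0_r. apply reach_refl, HN, Hn.
    - apply reach_snoc with (r (n + k)%nat); [apply IH, Hn | |].
      + rewrite Nat.add_succ_r. apply (proj2 Hr).
      + apply HN. lia. }
  intros n m Hn Hm. apply conn_avoid_reach.
  destruct (Nat.le_ge_cases n m).
  - replace m with (n + (m - n))%nat by lia. apply Hup, Hn.
  - apply reach_sym. replace n with (m + (n - m))%nat by lia. apply Hup, Hm.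
Qed.

Lemma end_tail_inC E r S : is_end adj E -> E r ->
  exists N, forall n, (N <= n)%nat -> inC adj S E (r n).
Proof.
  intros HE Er. destruct (ray_tail_conn S (end_ray HE Er)) as [N HN].
  exists N. intros n Hn. exists r. split; [exact Er|]. exists N. intros m Hm. apply HN; assumption.
Qed.

Lemma inC_conn_avoid E S a b : is_end adj E -> inC adj S E a -> inC adj S E b ->
  conn_avoid adj S a b.
Proof.
  intros HE [r [Er [N HN]]] [r' [Er' [N' HN']]].
  destruct (end_equiv HE Er Er' S) as [K HK].
  apply conn_avoid_trans with (r (Nat.max N K)); [apply HN; lia|].
  apply conn_avoid_trans with (r' (Nat.max N' K)); [apply HK; lia|].
  apply conn_avoid_sym, HN'. lia.
Qed.

Lemma inC_conn_avoid_back E S a b : inC adj S E b -> conn_avoid adj S a b -> inC adj S E a.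
Proof.
  intros [r [Er [N HN]]] Hab. exists r. split; [exact Er|]. exists N.
  intros n Hn. eapply conn_avoid_trans; eauto.
Qed.

Lemma inC_mono S1 S2 E a : incl S1 S2 -> inC adj S2 E a -> inC adj S1 E a.
Proof.
  intros Hincl [r [Er [N HN]]]. exists r. split; [exact Er|]. exists N.
  intros n Hn. exact (conn_avoid_mono Hincl (HN n Hn)).
Qed.

Lemma inC_notin S E a : inC adj S E a -> ~ In a S.
Proof. intros [r [_ [N HN]]]. exact (proj1 (HN N (le_n N))). Qed.

Lemma end_eq_of_inC E E' : is_end adj E -> is_end adj E' ->
  (forall S, exists z, inC adj S E z /\ inC adj S E' z) -> E = E'.
Proof.
  intros HE HE' Hmeet.
  destruct HE as [r0 [Hr0 HE]], HE' as [r1 [Hr1 HE']].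
  assert (H01 : equiv_rays adj r0 r1).
  { intros S. destruct (Hmeet S) as [z [[r [Er [N HN]]] [r' [Er' [N' HN']]]]].
    apply HE in Er as [_ Er]. apply HE' in Er' as [_ Er'].
    destruct (Er S) as [K HK], (Er' S) as [K' HK'].
    exists (Nat.max K K'). intros n m Hn Hm.
    apply conn_avoid_trans with (r (Nat.max N K)); [apply HK; lia|].
    apply conn_avoid_trans with z; [apply conn_avoid_sym, HN; lia|].
    apply conn_avoid_trans with (r' (Nat.max N' K')); [apply HN'; lia|].
    apply conn_avoid_sym, HK'; lia. }
  apply functional_extensionality. intro r. apply propositional_extensionality.
  rewrite HE, HE'. split; intros [Hr Hequiv]; split; auto.
  - exact (equiv_rays_trans (equiv_rays_sym H01) Hequiv).
  - exact (equiv_rays_trans H01 Hequiv).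
Qed.

Lemma neighbours_list S : locally_finite adj ->
  exists L, forall v w, In v S -> adj v w -> In w L.
Proof.
  intro Hlf. induction S as [|x S [L HL]].
  - exists []. intros v w [].
  - destruct (Hlf x) as [Lx HLx]. exists (Lx ++ L).
    intros v w [<-|Hv] Hvw; apply in_or_app; eauto.
Qed.

Definition weight (p : point V) u : R := match p with Cpx g => g u | Endp _ => 0 end.

Definition ball f eps (q : point V) : Prop :=
  valid adj q /\ exists g, q = Cpx g /\ forall w, Rabs (g w - f w) < eps.

Lemma ball_basic f eps : 0 < eps -> basic_nbhd adj (Cpx f) (ball f eps).
Proof. intro Heps. exists eps. split; [exact Heps | reflexivity]. Qed.

Lemma closure_in_sub (HV : V -> Prop) HE p :
  in_sub adj HV HE p -> closure adj (in_sub adj HV HE) p.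
Proof.
  intro Hp. assert (Hv : valid adj p).
  { destruct Hp as [[v [_ [f [-> Hf]]]]|[f [u [v [-> [_ Hi]]]]]]; [left | right]; eauto. }
  split; [exact Hv|]. intros N HN. exists p. split; [|exact Hp].
  destruct p as [f|E].
  - destruct HN as [eps [Heps HN]]. apply HN. split; [exact Hv|]. exists f. split; [reflexivity|].
    intro w. rewrite Rminus_diag, Rabs_R0. exact Heps.
  - destruct Hp as [[v [_ [f [Hf _]]]]|[f [u [v [Hf _]]]]]; discriminate.
Qed.

Lemma closure_nonempty P p : closure adj P p -> exists q, P q.
Proof.
  intros [Hv Hcl]. destruct p as [f|E].
  - destruct (Hcl (ball f 1)) as [q [_ Hq]]; [apply ball_basic; lra | eauto].
  - destruct (Hcl (fun q => valid adj q /\ inChat adj [] E q)) as [q [_ Hq]];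
      [exists []; tauto | eauto].
Qed.

Lemma closure_vertex (HV : V -> Prop) HE p u :
  closure adj (in_sub adj HV HE) p -> vtx_at p u -> HV u \/ exists z, HE u z \/ HE z u.
Proof.
  intros [_ Hcl] [f [-> [Hfu Hf]]].
  destruct (Hcl (ball f (1/2))) as [q [[_ [g [-> Hg]]] Hq]]; [apply ball_basic; lra|].
  assert (Hgu : g u <> 0).
  { specialize (Hg u). rewrite Hfu in Hg. apply Rabs_lt_between in Hg. lra. }
  destruct Hq as [[v [Hv [g' [Heq Hg']]]]|[g' [a [b [Heq [Hab Hi]]]]]];
    injection Heq as <-.
  - left. rewrite (vertex_fun_supp Hg' Hgu). exact Hv.
  - right. destruct (inner_of_supp Hi Hgu) as [->| ->]; eauto.
Qed.

Lemma closure_edge (HV : V -> Prop) HE f u v :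
  closure adj (in_sub adj HV HE) (Cpx f) -> inner_of adj f u v -> HE u v \/ HE v u.
Proof.
  intros [_ Hcl] Hi. pose proof (inner_of_pos Hi) as [Pu Pv].
  pose proof (Rmin_l (f u) (f v)). pose proof (Rmin_r (f u) (f v)).
  destruct (Hcl (ball f (Rmin (f u) (f v)))) as [q [[Hq [g [-> Hg]]] Hin]];
    [apply ball_basic, Rmin_glb_lt; lra|].
  assert (Hgu : g u <> 0) by (specialize (Hg u); apply Rabs_lt_between in Hg; lra).
  assert (Hgv : g v <> 0) by (specialize (Hg v); apply Rabs_lt_between in Hg; lra).
  pose proof (cpx_inner_of Hq Hgu Hgv (adj_neq (proj1 Hi))) as Hguv.
  destruct Hin as [[x [_ [g' [Heq Hg']]]]|[g' [a [b [Heq [Hab Hi']]]]]]; injection Heq as <-.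
  - exfalso. exact (vertex_fun_not_inner Hg' Hguv).
  - pose proof (adj_neq (proj1 Hi)).
    destruct (inner_of_supp Hi' Hgu) as [->| ->], (inner_of_supp Hi' Hgv) as [->| ->];
      auto; congruence.
Qed.

Definition edge_closed (A : point V -> Prop) : Prop :=
  forall f g u z, inner_of adj f u z -> inner_of adj g u z -> A (Cpx f) -> A (Cpx g).

Lemma closure_in_sub_edge_closed (HV : V -> Prop) HE : edge_closed (closure adj (in_sub adj HV HE)).
Proof.
  intros f g u z Hf Hg Hcl. apply closure_in_sub. right.
  destruct (closure_edge Hcl Hf) as [H|H].
  - exists g, u, z. auto.
  - exists g, z, u. auto using inner_of_sym.
Qed.

Section Arc.
Variables (alpha : R -> point V) (A : point V -> Prop).
Hypothesis Harc : arc_param adj alpha A.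

Lemma arc_valid t : unit_interval t -> valid adj (alpha t).
Proof. destruct Harc as [H _]. exact (H t). Qed.

Lemma arc_mem t : unit_interval t -> A (alpha t).
Proof. destruct Harc as [_ [H _]]. intro Ut. apply H. eauto. Qed.

Lemma arc_surj p : A p -> exists t, unit_interval t /\ alpha t = p.
Proof. destruct Harc as [_ [H _]]. apply H. Qed.

Lemma arc_inj s t : unit_interval s -> unit_interval t -> alpha s = alpha t -> s = t.
Proof. destruct Harc as [_ [_ [H _]]]. apply H. Qed.

Lemma arc_cpx t g : unit_interval t -> alpha t = Cpx g -> is_cpx adj g.
Proof. intros Ut Hg. pose proof (arc_valid Ut) as Hv. rewrite Hg in Hv. exact Hv. Qed.

Lemma arc_end t E : unit_interval t -> alpha t = Endp E -> is_end adj E.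
Proof. intros Ut HE. pose proof (arc_valid Ut) as Hv. rewrite HE in Hv. exact Hv. Qed.

Lemma arc_vtx_unique s t z : unit_interval s -> unit_interval t ->
  vtx_at (alpha s) z -> vtx_at (alpha t) z -> s = t.
Proof.
  intros Us Ut [f [Hf Hfz]] [g [Hg Hgz]]. apply arc_inj; [exact Us | exact Ut |].
  rewrite Hf, Hg, (vertex_fun_eq Hfz Hgz). reflexivity.
Qed.

Lemma arc_cont_cpx t f : unit_interval t -> alpha t = Cpx f -> forall eps, 0 < eps ->
  exists d, 0 < d /\ forall s, unit_interval s -> Rabs (t - s) < d ->
    exists g, alpha s = Cpx g /\ is_cpx adj g /\ forall w, Rabs (g w - f w) < eps.
Proof.
  destruct Harc as [_ [_ [_ [Hcont _]]]]. intros Ut Hf eps Heps.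
  destruct (Hcont t Ut (ball f eps)) as [d [Hd Hnear]]; [rewrite Hf; apply ball_basic, Heps|].
  exists d. split; [exact Hd|]. intros s Us Hs.
  destruct (Hnear s Us Hs) as [Hv [g [Hg Hgf]]]. rewrite Hg in Hv. eauto.
Qed.

Lemma arc_cont_end t E : unit_interval t -> alpha t = Endp E -> forall S,
  exists d, 0 < d /\ forall s, unit_interval s -> Rabs (t - s) < d -> inChat adj S E (alpha s).
Proof.
  destruct Harc as [_ [_ [_ [Hcont _]]]]. intros Ut HE S.
  destruct (Hcont t Ut (fun q => valid adj q /\ inChat adj S E q)) as [d [Hd Hnear]];
    [rewrite HE; exists S; tauto|].
  exists d. split; [exact Hd|]. intros s Us Hs. apply Hnear; assumption.
Qed.

Lemma arc_inv_cont t f : unit_interval t -> alpha t = Cpx f -> forall eps, 0 < eps ->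
  exists eta, 0 < eta /\ forall s, unit_interval s -> ball f eta (alpha s) -> Rabs (t - s) < eps.
Proof.
  destruct Harc as [_ [_ [_ [_ Hinv]]]]. intros Ut Hf eps Heps.
  destruct (Hinv t Ut eps Heps) as [N [HN Hnear]]. rewrite Hf in HN.
  destruct HN as [eta [Heta HN]]. exists eta. split; [exact Heta|].
  intros s Us Hs. apply Hnear; [exact Us | apply HN, Hs].
Qed.

Lemma arc_supp_grows t f : unit_interval t -> alpha t = Cpx f ->
  exists d, 0 < d /\ forall s, unit_interval s -> Rabs (t - s) < d ->
    exists g, alpha s = Cpx g /\ is_cpx adj g /\ forall w, f w <> 0 -> g w <> 0.
Proof.
  intros Ut Hf.
  assert (Hmin : exists eps, 0 < eps /\ forall w, f w <> 0 -> eps <= f w).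
  { destruct (arc_cpx Ut Hf) as [[v Hv]|[a [b Hab]]].
    - exists 1. split; [lra|]. intros w Hw. rewrite (vertex_fun_supp Hv Hw). destruct Hv; lra.
    - pose proof (inner_of_pos Hab). exists (Rmin (f a) (f b)).
      split; [apply Rmin_glb_lt; lra|].
      intros w Hw. destruct (inner_of_supp Hab Hw) as [->| ->]; [apply Rmin_l | apply Rmin_r]. }
  destruct Hmin as [eps [Heps Hmin]].
  destruct (arc_cont_cpx Ut Hf Heps) as [d [Hd Hnear]].
  exists d. split; [exact Hd|]. intros s Us Hs.
  destruct (Hnear s Us Hs) as [g [Hg [Hgc Hgf]]]. exists g. repeat split; auto.
  intros w Hw. specialize (Hgf w). specialize (Hmin w Hw). apply Rabs_lt_between in Hgf. lra.
Qed.

Lemma arc_limit_supp t F : unit_interval t ->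
  (forall d, 0 < d -> exists s, unit_interval s /\ Rabs (t - s) < d /\
     exists g, alpha s = Cpx g /\ forall w, g w <> 0 -> In w F) ->
  exists f, alpha t = Cpx f /\ forall w, f w <> 0 -> In w F.
Proof.
  intros Ut Hnear. destruct (alpha t) as [f|E] eqn:Hat.
  - exists f. split; [reflexivity|]. intros w Hw.
    destruct (arc_supp_grows Ut Hat) as [d [Hd Hgrow]].
    destruct (Hnear d Hd) as [s [Us [Hs [g [Hg HgF]]]]].
    destruct (Hgrow s Us Hs) as [g' [Hg' [_ Hsub]]]. rewrite Hg in Hg'. injection Hg' as <-.
    exact (HgF w (Hsub w Hw)).
  - exfalso. destruct (arc_cont_end Ut Hat F) as [d [Hd Hend]].
    destruct (Hnear d Hd) as [s [Us [Hs [g [Hg HgF]]]]].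
    specialize (Hend s Us Hs). rewrite Hg in Hend. destruct Hend as [w [Hw HwC]].
    exact (inC_notin HwC (HgF w Hw)).
Qed.

Lemma arc_param_rev : arc_param adj (fun s => alpha (1 - s)) A.
Proof.
  unfold arc_param, homeo_onto, unit_interval in *.
  destruct Harc as [Hval [Himg [Hinj [Hcont Hinv]]]]. split; [|split; [|split; [|split]]].
  - intros x Hx. apply Hval. lra.
  - intro p. rewrite Himg. split; intros [x [Hx <-]]; exists (1 - x); (split; [lra|]).
    + f_equal. ring.
    + reflexivity.
  - intros x y Hx Hy Hxy. apply Hinj in Hxy; lra.
  - intros x Hx N HN. destruct (Hcont (1 - x) ltac:(lra) N HN) as [d [Hd Hnear]].
    exists d. split; [exact Hd|]. intros y Hy Hxy. apply Hnear; [lra|].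
    replace (1 - x - (1 - y)) with (- (x - y)) by ring. rewrite Rabs_Ropp. exact Hxy.
  - intros x Hx eps Heps. destruct (Hinv (1 - x) ltac:(lra) eps Heps) as [N [HN Hnear]].
    exists N. split; [exact HN|]. intros y Hy HNy.
    specialize (Hnear (1 - y) ltac:(lra) HNy).
    replace (x - y) with (- (1 - x - (1 - y))) by ring. rewrite Rabs_Ropp. exact Hnear.
Qed.

Lemma arc_near_inner t f u z : unit_interval t -> alpha t = Cpx f -> inner_of adj f u z ->
  exists d, 0 < d /\ forall s, unit_interval s -> Rabs (t - s) < d ->
    exists g, alpha s = Cpx g /\ inner_of adj g u z.
Proof.
  intros Ut Hf Hi. pose proof (inner_of_pos Hi) as [Pu Pz].
  destruct (arc_supp_grows Ut Hf) as [d [Hd Hnear]].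
  exists d. split; [exact Hd|]. intros s Us Hs.
  destruct (Hnear s Us Hs) as [g [Hg [Hgc Hsub]]]. exists g. split; [exact Hg|].
  apply cpx_inner_of; [exact Hgc | apply Hsub; lra .. | exact (adj_neq (proj1 Hi))].
Qed.

Lemma arc_near_vertex u t : posA alpha u t ->
  exists d, 0 < d /\ forall s, unit_interval s -> s <> t -> Rabs (t - s) < d ->
    exists g z, alpha s = Cpx g /\ inner_of adj g u z.
Proof.
  intros [Ut [f [Hf Hfu]]]. destruct (arc_supp_grows Ut Hf) as [d [Hd Hnear]].
  exists d. split; [exact Hd|]. intros s Us Hst Hs.
  destruct (Hnear s Us Hs) as [g [Hg [Hgc Hsub]]].
  destruct (cpx_edge_at Hgc (Hsub u ltac:(destruct Hfu; lra))) as [z Hz]; [|eauto].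
  intro Hgu. apply Hst, (arc_vtx_unique (z := u) Us Ut); [exists g | exists f]; auto.
Qed.

Lemma arc_edge_values_near t f u z : unit_interval t -> alpha t = Cpx f -> inner_of adj f u z ->
  (forall g, inner_of adj g u z -> A (Cpx g)) -> forall d, 0 < d ->
  exists e, 0 < e /\ forall lam, Rabs (lam - f u) < e ->
    exists s, unit_interval s /\ Rabs (t - s) < d /\ alpha s = Cpx (edge_weights u z lam).
Proof.
  intros Ut Hf Hi HA d Hd. pose proof (inner_of_pos Hi) as [Pu Pz].
  pose proof Hi as [Huz [_ [Hfz _]]].
  destruct (arc_inv_cont Ut Hf Hd) as [eta [Heta Hinv]].
  pose proof (Rmin_l eta (Rmin (f u) (f z))). pose proof (Rmin_r eta (Rmin (f u) (f z))).
  pose proof (Rmin_l (f u) (f z)). pose proof (Rmin_r (f u) (f z)).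
  exists (Rmin eta (Rmin (f u) (f z))).
  split; [apply Rmin_glb_lt; [lra | apply Rmin_glb_lt; lra]|].
  intros lam Hlam. pose proof Hlam as Hlam'. apply Rabs_lt_between in Hlam'.
  assert (Hlam01 : 0 < lam < 1) by lra.
  destruct (arc_surj (HA _ (edge_weights_inner Huz Hlam01))) as [s [Us Hs]].
  exists s. split; [exact Us|]. split; [|exact Hs].
  apply (Hinv s Us). rewrite Hs.
  split; [right; exists u, z; exact (edge_weights_inner Huz Hlam01)|].
  exists (edge_weights u z lam). split; [reflexivity|].
  intro w. eapply Rle_lt_trans; [exact (edge_weights_near lam w Hi) | lra].
Qed.

Lemma arc_weight_cont u lo hi : 0 <= lo -> hi <= 1 ->
  (forall t, lo <= t <= hi -> exists g, alpha t = Cpx g) ->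
  cont_on (fun s => weight (alpha s) u) lo hi.
Proof.
  intros Hlo Hhi Hcpx t Ht eps Heps. destruct (Hcpx t Ht) as [f Hf].
  destruct (arc_cont_cpx (t := t) ltac:(split; lra) Hf Heps) as [d [Hd Hnear]].
  exists d. split; [exact Hd|]. intros s Hs Hts.
  destruct (Hnear s ltac:(split; lra) Hts) as [g [Hg [_ Hgf]]].
  rewrite Hg, Hf. apply Hgf.
Qed.

Lemma arc_start_not_inner f u z : alpha 0 = Cpx f -> inner_of adj f u z ->
  (forall g, inner_of adj g u z -> A (Cpx g)) -> False.
Proof.
  intros H0 Hi HA. assert (U0 : unit_interval 0) by (split; lra).
  destruct (arc_near_inner U0 H0 Hi) as [d [Hd Hedge]].
  set (h := fun s => weight (alpha s) u).
  assert (Hh : forall s g, alpha s = Cpx g -> h s = g u).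
  { intros s g Hg. unfold h. rewrite Hg. reflexivity. }
  destruct (arc_edge_values_near U0 H0 Hi HA Hd) as [e [He Hvalues]].
  assert (Htaken : forall lam, 0 < Rabs (lam - f u) < e ->
            exists s, 0 < s < d /\ s <= 1 /\ h s = lam).
  { intros lam [Hne Hlam]. destruct (Hvalues lam Hlam) as [s [[Hs0 Hs1] [Hs Has]]].
    apply Rabs_lt_between in Hs. exists s. rewrite (Hh s _ Has), edge_weights_at.
    repeat split; try lra. destruct (Req_dec s 0) as [->|]; [exfalso|lra].
    rewrite H0 in Has. injection Has as Hfe. apply (f_equal (fun k => k u)) in Hfe.
    rewrite edge_weights_at in Hfe. rewrite Hfe, Rminus_diag, Rabs_R0 in Hne. lra. }
  destruct (Htaken (f u + e / 2)) as [sp [Hsp [Hsp1 Hhsp]]].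
  { replace (f u + e / 2 - f u) with (e / 2) by ring. rewrite Rabs_right; lra. }
  destruct (Htaken (f u - e / 2)) as [sm [Hsm [Hsm1 Hhsm]]].
  { replace (f u - e / 2 - f u) with (- (e / 2)) by ring. rewrite Rabs_Ropp, Rabs_right; lra. }
  assert (Hcont : forall lo hi, 0 <= lo -> hi < d -> hi <= 1 -> cont_on h lo hi).
  { intros lo hi Hlo Hhi Hhi1. apply arc_weight_cont; [lra | lra |].
    intros t Ht.
    destruct (Hedge t ltac:(split; lra) ltac:(apply Rabs_lt_between; lra)) as [g [Hg _]].
    eauto. }
  (* [h] takes values on both sides of [f u] near 0, so it returns to [f u] at a positive time,
     where [alpha] revisits [alpha 0] *)
  assert (Hback : exists tc, 0 < tc < d /\ tc <= 1 /\ h tc = f u).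
  { destruct (Rlt_le_dec sm sp).
    - destruct (@IVT_cont_on h sm sp (f u)) as [tc [Htc Hhtc]];
        [lra | apply Hcont; lra | lra | lra | exists tc; repeat split; lra].
    - destruct (@IVT_cont_on_down h sp sm (f u)) as [tc [Htc Hhtc]];
        [lra | apply Hcont; lra | lra | lra | exists tc; repeat split; lra]. }
  destruct Hback as [tc [Htc [Htc1 Hhtc]]].
  destruct (Hedge tc ltac:(split; lra) ltac:(apply Rabs_lt_between; lra)) as [g [Hg Hgi]].
  rewrite (Hh tc g Hg) in Hhtc.
  enough (tc = 0) by lra. apply arc_inj; [split; lra | exact U0 |].
  rewrite Hg, H0, (inner_of_eq Hgi Hi Hhtc). reflexivity.
Qed.

Lemma arc_inner_edge_forward u z lo hi : 0 <= lo -> lo <= hi <= 1 ->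
  (exists f, alpha lo = Cpx f /\ inner_of adj f u z) ->
  (forall s, lo <= s <= hi -> ~ vtx_at (alpha s) u /\ ~ vtx_at (alpha s) z) ->
  forall s, lo <= s <= hi -> exists g, alpha s = Cpx g /\ inner_of adj g u z.
Proof.
  intros Hlo Hhi Hstart Hnv. apply real_induction; [lra | exact Hstart |].
  intros t Ht Hleft. assert (Ut : unit_interval t) by (split; lra).
  assert (Hcur : exists f, alpha t = Cpx f /\ inner_of adj f u z).
  { destruct (Req_dec t lo) as [->|Hta]; [exact Hstart|].
    destruct (arc_limit_supp (F := [u; z]) Ut) as [f [Hf HfF]].
    - intros d Hd. destruct (exists_left_near (lo := lo) (t := t) ltac:(lra) Hd) as [s [Hs Hts]].
      exists s. split; [split; lra|]. split; [apply Rabs_lt_between; lra|].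
      destruct (Hleft s Hs) as [g [Hg Hgi]]. exists g. split; [exact Hg|].
      intros w Hw. destruct (inner_of_supp Hgi Hw) as [->| ->]; simpl; auto.
    - exists f. split; [exact Hf|]. destruct (Hnv t Ht) as [Hnu Hnz].
      apply (cpx_supp_pair (arc_cpx Ut Hf) HfF);
        intro Hv; [apply Hnu | apply Hnz]; exists f; auto. }
  destruct Hcur as [f [Hf Hi]]. destruct (arc_near_inner Ut Hf Hi) as [d [Hd Hnear]].
  exists d. split; [exact Hd|]. intros s Hs Hsb.
  apply Hnear; [split; lra | apply Rabs_lt_between; lra].
Qed.

End Arc.

Lemma arc_inner_edge alpha A u z lo mid hi : arc_param adj alpha A ->
  0 <= lo <= mid -> mid <= hi <= 1 ->
  (exists f, alpha mid = Cpx f /\ inner_of adj f u z) ->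
  (forall s, lo <= s <= hi -> ~ vtx_at (alpha s) u /\ ~ vtx_at (alpha s) z) ->
  forall s, lo <= s <= hi -> exists g, alpha s = Cpx g /\ inner_of adj g u z.
Proof.
  intros Harc Hlo Hhi Hmid Hnv s Hs. destruct (Rle_dec mid s).
  - apply (arc_inner_edge_forward Harc (lo := mid) (hi := hi)); try lra; [exact Hmid|].
    intros s' Hs'. apply Hnv. lra.
  - replace s with (1 - (1 - s)) by ring.
    apply (arc_inner_edge_forward (arc_param_rev Harc) (lo := 1 - mid) (hi := 1 - lo)); try lra.
    + replace (1 - (1 - mid)) with mid by ring. exact Hmid.
    + intros s' Hs'. apply Hnv. lra.
Qed.

Definition no_pos_between (alpha : R -> point V) (s t : R) : Prop :=
  forall w (r : R), posA alpha w r -> ~ (s < r < t).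

Lemma arc_pred_vertex alpha A u t : arc_param adj alpha A -> edge_closed A ->
  posA alpha u t -> 0 < t -> exists z t', posA alpha z t' /\ t' < t /\ no_pos_between alpha t' t.
Proof.
  intros Harc HA Hu Ht. pose proof Hu as [Ut _]. pose proof Ut as [_ Hle1].
  destruct (arc_near_vertex Harc Hu) as [d [Hd Hnear]].
  destruct (exists_left_near Ht Hd) as [t1 [Ht1 Ht1d]].
  assert (Hedge : forall s, t1 <= s < t -> exists g z, alpha s = Cpx g /\ inner_of adj g u z).
  { intros s Hs. apply Hnear; [split; lra | lra | apply Rabs_lt_between; lra]. }
  destruct (Hedge t1 ltac:(lra)) as [g1 [z [Hg1 Hi1]]].
  assert (Hno_vtx : forall s w, t1 <= s < t -> ~ vtx_at (alpha s) w).
  { intros s w Hs [g [Hg Hgw]].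
    destruct (Hedge s Hs) as [g' [z' [Hg' Hi']]].
    rewrite Hg in Hg'. injection Hg' as <-. exact (vertex_fun_not_inner Hgw Hi'). }
  assert (Halong : forall lo hi, 0 <= lo <= t1 -> t1 <= hi < t ->
            (forall s, lo <= s <= t1 -> ~ vtx_at (alpha s) z) ->
            forall s, lo <= s <= hi -> exists g, alpha s = Cpx g /\ inner_of adj g u z).
  { intros lo hi Hlo Hhi Hz. apply (arc_inner_edge Harc (mid := t1)); [lra | lra | eauto |].
    intros s Hs. split.
    - intro Hsu. enough (s = t) by lra.
      apply (arc_vtx_unique Harc (z := u)); [split; lra | exact Ut | exact Hsu | exact (proj2 Hu)].
    - intro Hsz. destruct (Rle_dec s t1).
      + exact (Hz s ltac:(lra) Hsz).
      + exact (Hno_vtx s z ltac:(lra) Hsz). }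
  (* the edge [uz] is left through [z]: the arc cannot start inside it *)
  assert (Hz : exists t', 0 <= t' <= t1 /\ vtx_at (alpha t') z).
  { apply NNPP. intro Hnz.
    assert (Hz0 : forall s, 0 <= s <= t1 -> ~ vtx_at (alpha s) z) by (intros s Hs Hsz; eauto).
    destruct (Halong 0 t1 ltac:(lra) ltac:(lra) Hz0 0 ltac:(lra)) as [g0 [Hg0 Hi0]].
    apply (arc_start_not_inner Harc Hg0 Hi0). intros g Hg. apply (HA g0 g u z Hi0 Hg).
    rewrite <- Hg0. apply (arc_mem Harc). split; lra. }
  destruct Hz as [t' [Ht' Hzt']].
  assert (Ut' : unit_interval t') by (split; lra).
  exists z, t'. split; [split; assumption|]. split; [lra|].
  intros w s [Us Hws] Hs.
  destruct (Rle_dec t1 s); [exact (Hno_vtx s w ltac:(lra) Hws)|].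
  assert (Hz' : forall s', s <= s' <= t1 -> ~ vtx_at (alpha s') z).
  { intros s' Hs' Hs'z. enough (s' = t') by lra.
    apply (arc_vtx_unique Harc (z := z)); [split; lra | exact Ut' | exact Hs'z | exact Hzt']. }
  destruct (Halong s t1 ltac:(lra) ltac:(lra) Hz' s ltac:(lra)) as [g [Hg Hgi]].
  destruct Hws as [g' [Hg' Hg'w]]. rewrite Hg in Hg'. injection Hg' as <-.
  exact (vertex_fun_not_inner Hg'w Hgi).
Qed.

Lemma arc_succ_vertex alpha A u t : arc_param adj alpha A -> edge_closed A ->
  posA alpha u t -> t < 1 -> exists z t', posA alpha z t' /\ t < t' /\ no_pos_between alpha t t'.
Proof.
  intros Harc HA Hu Ht.
  assert (Hrev : forall v s, posA (fun x => alpha (1 - x)) v s <-> posA alpha v (1 - s)).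
  { intros v s. unfold posA, unit_interval. split; intros [Hs Hv]; (split; [lra | exact Hv]). }
  destruct (arc_pred_vertex (u := u) (t := 1 - t) (arc_param_rev Harc) HA)
    as [z [t' [Hz [Ht' Hno]]]].
  - apply Hrev. replace (1 - (1 - t)) with t by ring. exact Hu.
  - lra.
  - exists z, (1 - t'). split; [exact (proj1 (Hrev z t') Hz)|]. split; [lra|].
    intros w s Hws Hs. apply (Hno w (1 - s)); [|lra].
    apply Hrev. replace (1 - (1 - s)) with s by ring. exact Hws.
Qed.


Lemma arc_in_subgraph_supp beta B (HV : V -> Prop) HE F :
  arc_param adj beta B -> (forall p, B p -> closure adj (in_sub adj HV HE) p) ->
  (forall a b, HE a b -> HE b a) -> (forall a b, HE a b -> In a F -> In b F) ->
  (exists g, beta 0 = Cpx g /\ forall w, g w <> 0 -> In w F) ->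
  forall s, unit_interval s -> exists g, beta s = Cpx g /\ forall w, g w <> 0 -> In w F.
Proof.
  intros Hb HB HEsym HF Hstart. apply real_induction; [lra | exact Hstart |].
  intros t Ut Hleft.
  assert (Hcur : exists f, beta t = Cpx f /\ forall w, f w <> 0 -> In w F).
  { destruct (Req_dec t 0) as [->|Ht0]; [exact Hstart|].
    apply (arc_limit_supp Hb Ut). intros d Hd.
    destruct (exists_left_near (lo := 0) (t := t) ltac:(destruct Ut; lra) Hd) as [s [Hs Hts]].
    exists s. split; [split; destruct Ut; lra|].
    split; [apply Rabs_lt_between; lra | apply Hleft, Hs]. }
  destruct Hcur as [f [Hf HfF]].
  destruct (cpx_supp_nonempty (arc_cpx Hb Ut Hf)) as [w0 Hw0].
  pose proof (HfF w0 Hw0) as Hw0F.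
  destruct (arc_supp_grows Hb Ut Hf) as [d [Hd Hnear]].
  exists d. split; [exact Hd|]. intros s Hs Hs1.
  assert (Us : unit_interval s) by (destruct Ut; split; lra).
  destruct (Hnear s Us ltac:(apply Rabs_lt_between; lra)) as [g [Hg [Hgc Hsub]]].
  exists g. split; [exact Hg|]. specialize (Hsub w0 Hw0).
  destruct Hgc as [[v Hv]|[a [b Hab]]].
  - intros w Hw. rewrite (vertex_fun_supp Hv Hw), <- (vertex_fun_supp Hv Hsub). exact Hw0F.
  - assert (Hcl : closure adj (in_sub adj HV HE) (Cpx g)).
    { rewrite <- Hg. apply HB, (arc_mem Hb Us). }
    assert (Hba : HE a b /\ HE b a) by (destruct (closure_edge Hcl Hab); auto).
    destruct Hba as [Hab' Hba].
    intros w Hw.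
    destruct (inner_of_supp Hab Hw), (inner_of_supp Hab Hsub); subst; eauto.
Qed.

Lemma arc_local_sep alpha A E t : arc_param adj alpha A -> is_end adj E -> unit_interval t ->
  alpha t <> Endp E -> exists S d, 0 < d /\ forall s z, unit_interval s -> Rabs (t - s) < d ->
    vtx_at (alpha s) z -> ~ inC adj S E z.
Proof.
  intros Harc HE Ut Hne. destruct (alpha t) as [f|E'] eqn:Hat.
  - destruct (cpx_supp_list (arc_cpx Harc Ut Hat)) as [S HS].
    destruct (cpx_supp_nonempty (arc_cpx Harc Ut Hat)) as [w Hw].
    destruct (arc_supp_grows Harc Ut Hat) as [d [Hd Hnear]].
    exists S, d. split; [exact Hd|]. intros s z Us Hs [g [Hg Hgz]] HzC.
    destruct (Hnear s Us Hs) as [g' [Hg' [_ Hsub]]]. rewrite Hg in Hg'. injection Hg' as <-.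
    apply (inC_notin HzC). rewrite <- (vertex_fun_supp Hgz (Hsub w Hw)). exact (HS w Hw).
  - pose proof (arc_end Harc Ut Hat) as HE'.
    assert (Hsep : exists S, forall z, inC adj S E z -> ~ inC adj S E' z).
    { apply NNPP. intro Hn. apply Hne. f_equal. apply (end_eq_of_inC HE' HE).
      intro S. apply NNPP. intro Hn2. apply Hn. exists S. intros z Hz Hz'. eauto. }
    destruct Hsep as [S HS]. destruct (arc_cont_end Harc Ut Hat S) as [d [Hd Hend]].
    exists S, d. split; [exact Hd|]. intros s z Us Hs [g [Hg Hgz]] HzC.
    specialize (Hend s Us Hs). rewrite Hg in Hend. destruct Hend as [w [Hw HwC]].
    rewrite (vertex_fun_supp Hgz Hw) in HwC. exact (HS z HzC HwC).
Qed.

Lemma arc_compact_sep alpha A E lo hi : arc_param adj alpha A -> is_end adj E ->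
  0 <= lo <= hi -> hi <= 1 -> (forall t, lo <= t <= hi -> alpha t <> Endp E) ->
  exists S, forall t z, lo <= t <= hi -> vtx_at (alpha t) z -> ~ inC adj S E z.
Proof.
  intros Harc HE Hlo Hhi Hne.
  set (P := fun x => exists S, forall t z, lo <= t <= x -> vtx_at (alpha t) z -> ~ inC adj S E z).
  enough (Hall : forall x, lo <= x <= hi -> P x) by (apply Hall; lra).
  assert (Hloc : forall t, lo <= t <= hi -> exists S d, 0 < d /\ forall s z, unit_interval s ->
             Rabs (t - s) < d -> vtx_at (alpha s) z -> ~ inC adj S E z).
  { intros t Ht. apply (arc_local_sep Harc HE); [split; lra | apply Hne, Ht]. }
  apply real_induction; [lra| |].
  - destruct (Hloc lo ltac:(lra)) as [S [d [Hd HS]]]. exists S. intros t z Ht.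
    replace t with lo by lra. apply HS; [split; lra|]. rewrite Rminus_diag, Rabs_R0. exact Hd.
  - intros t Ht Hleft. destruct (Hloc t Ht) as [S [d [Hd HS]]].
    exists d. split; [exact Hd|]. intros x Hx Hxhi.
    destruct (Req_dec t lo) as [->|Htlo].
    + exists S. intros t' z Ht'. apply HS; [split; lra | apply Rabs_lt_between; lra].
    + destruct (exists_left_near (lo := lo) (t := t) ltac:(lra) Hd) as [s [Hs Hts]].
      destruct (Hleft s Hs) as [S' HS'].
      exists (S' ++ S). intros t' z Ht' Hz HzC. destruct (Rle_dec t' s).
      * apply (HS' t' z ltac:(lra) Hz). apply (inC_mono (incl_appl S (incl_refl S')) HzC).
      * apply (HS t' z ltac:(split; lra) ltac:(apply Rabs_lt_between; lra) Hz).
        apply (inC_mono (incl_appr S' (incl_refl S)) HzC).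
Qed.

Definition touches (X : V -> Prop) (p : point V) : Prop :=
  match p with
  | Cpx g => exists z, g z <> 0 /\ X z
  | Endp E => forall S, exists z, X z /\ inC adj S E z
  end.

Section Sweep.
Variables (alpha : R -> point V) (A : point V -> Prop) (X I : V -> Prop).
Hypothesis Harc : arc_param adj alpha A.
Hypothesis HX : forall a b, X a -> adj a b -> I b -> X b.

Lemma touches_open t f : unit_interval t -> alpha t = Cpx f -> touches X (Cpx f) ->
  exists d, 0 < d /\ forall s, unit_interval s -> Rabs (t - s) < d -> touches X (alpha s).
Proof.
  intros Ut Hf [z [Hz Xz]]. destruct (arc_supp_grows Harc Ut Hf) as [d [Hd Hnear]].
  exists d. split; [exact Hd|]. intros s Us Hs.
  destruct (Hnear s Us Hs) as [g [Hg [_ Hsub]]]. rewrite Hg. exists z. auto.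
Qed.

Lemma touches_limit_cpx t f : unit_interval t -> alpha t = Cpx f ->
  (forall w, is_vertex_fun f w -> I w) ->
  (forall d, 0 < d -> exists s, unit_interval s /\ Rabs (t - s) < d /\ touches X (alpha s)) ->
  touches X (Cpx f).
Proof.
  intros Ut Hf HI Hnear.
  destruct (arc_supp_grows Harc Ut Hf) as [d [Hd Hgrow]].
  destruct (Hnear d Hd) as [s [Us [Hs Htouch]]].
  destruct (Hgrow s Us Hs) as [g [Hg [Hgc Hsub]]]. rewrite Hg in Htouch.
  destruct Htouch as [z [Hz Xz]].
  destruct (arc_cpx Harc Ut Hf) as [[v Hv]|[a [b Hab]]].
  - (* [z] and [v] both carry weight at [alpha s], so they are equal or adjacent *)
    exists v. split; [destruct Hv; lra|].
    assert (Hgv : g v <> 0) by (apply Hsub; destruct Hv; lra).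
    destruct (classic (z = v)) as [<-|Hzv]; [exact Xz|].
    exact (HX Xz (proj1 (cpx_inner_of Hgc Hz Hgv Hzv)) (HI v Hv)).
  - pose proof (inner_of_pos Hab) as [Pa Pb].
    assert (Hgab : inner_of adj g a b).
    { apply cpx_inner_of; [exact Hgc | apply Hsub; lra .. | exact (adj_neq (proj1 Hab))]. }
    exists z. split; [|exact Xz]. destruct (inner_of_supp Hgab Hz) as [->| ->]; lra.
Qed.

Lemma touches_limit_end t E S : unit_interval t -> alpha t = Endp E ->
  (forall z, inC adj S E z -> I z) ->
  (forall d, 0 < d -> exists s, unit_interval s /\ Rabs (t - s) < d /\ touches X (alpha s)) ->
  exists d, 0 < d /\ forall s, unit_interval s -> Rabs (t - s) < d -> touches X (alpha s).
Proof.
  intros Ut HtE HI Hnear.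
  pose proof (arc_end Harc Ut HtE) as HE.
  destruct (arc_cont_end Harc Ut HtE S) as [d [Hd Hend]].
  assert (Hmeet : exists w, X w /\ inC adj S E w).
  { destruct (Hnear d Hd) as [s [Us [Hs Htouch]]]. specialize (Hend s Us Hs).
    pose proof (arc_valid Harc Us) as Hv.
    destruct (alpha s) as [g|E'].
    - destruct Htouch as [z [Hz Xz]], Hend as [w [Hw HwC]]. exists w. split; [|exact HwC].
      destruct (classic (z = w)) as [<-|Hzw]; [exact Xz|].
      exact (HX Xz (proj1 (cpx_inner_of Hv Hz Hw Hzw)) (HI w HwC)).
    - destruct (Htouch S) as [z [Xz HzC]], Hend as [r [Er [N HN]]].
      destruct (end_tail_inC S Hv Er) as [N' HN'].
      exists z. split; [exact Xz|].
      apply (inC_conn_avoid_back (b := r (Nat.max N N'))); [apply HN; lia|].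
      apply (inC_conn_avoid Hv HzC). apply HN'. lia. }
  destruct Hmeet as [w [Xw HwC]].
  (* the whole of [C(S, E)] is connected inside [I], so it joins [X] *)
  assert (HCX : forall z, inC adj S E z -> X z).
  { intros z HzC. apply (reach_spread HX Xw).
    apply (reach_mono HI). apply (reach_closed (P := fun y => ~ In y S)).
    - apply conn_avoid_reach, (inC_conn_avoid HE HwC HzC).
    - intros y Hy. apply (inC_conn_avoid_back HwC), conn_avoid_sym, conn_avoid_reach, Hy. }
  exists d. split; [exact Hd|]. intros s Us Hs. specialize (Hend s Us Hs).
  pose proof (arc_valid Harc Us) as Hv.
  destruct (alpha s) as [g|E'].
  - destruct Hend as [z [Hz HzC]]. exists z. auto.
  - destruct Hend as [r [Er [N HN]]]. intro S'.
    destruct (end_tail_inC S' Hv Er) as [N' HN'].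
    exists (r (Nat.max N N')). split; [apply HCX, HN | apply HN']; lia.
Qed.

End Sweep.

Variables (tV : V -> Prop) (tE : V -> V -> Prop).
Hypothesis tV_all : forall v, tV v.
Hypothesis tE_sym : forall u v, tE u v -> tE v u.
Hypothesis tE_adj : forall u v, tE u v -> adj u v.

Definition spine_arc := closure adj (in_sub adj (TmL_V tV tE) (TmL_E tV tE)).

Lemma spine_arc_vertex p z : spine_arc p -> vtx_at p z -> TmL_V tV tE z.
Proof.
  intros Hp Hz.
  destruct (closure_vertex Hp Hz) as [H|[y [[_ [H _]]|[_ [_ H]]]]]; [exact H | split; auto ..].
Qed.

Lemma spine_arc_edge_closed : edge_closed spine_arc.
Proof. exact (@closure_in_sub_edge_closed _ _). Qed.

Lemma spine_nonempty alpha : arc_param adj alpha spine_arc -> exists s0, TmL_V tV tE s0.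
Proof.
  intro Harc.
  destruct (closure_nonempty (arc_mem Harc (t := 0) ltac:(split; lra)))
    as [p [[v [Hv _]]|[f [a [b [_ [[_ [Ha _]] _]]]]]]]; [eauto|].
  exists a. split; [apply tV_all | exact Ha].
Qed.

Lemma cls_key_spine (alpha : R -> point V) u k : cls tV tE alpha u (Some k) -> TmL_V tV tE k.
Proof. intros [[v' [[_ [Hk _]] _]]|[[Hk _] _]]; exact Hk. Qed.

Lemma leaf_neighbour_spine lf m : arc_connected adj (closure adj (in_sub adj tV tE)) ->
  (exists s0, TmL_V tV tE s0) -> leaf tV tE lf -> tE lf m -> TmL_V tV tE m.
Proof.
  intros Hac [s0 Hs0] Hlf Hm. split; [apply tV_all|]. intro Hml.
  assert (Hlfm : forall w, tE lf w -> w = m).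
  { destruct Hlf as [_ [x [Hx Hu]]]. intros w Hw. rewrite (Hu w Hw). symmetry. exact (Hu m Hm). }
  assert (Hmlf : forall w, tE m w -> w = lf).
  { destruct Hml as [_ [x [Hx Hu]]]. intros w Hw.
    rewrite (Hu w Hw). symmetry. exact (Hu lf (tE_sym Hm)). }
  (* then [lf m] is a component of [T], which an arc from [m] to [s0] in the closure of [T]
     cannot leave *)
  set (F := [lf; m]).
  assert (HF : forall a b, tE a b -> In a F -> In b F).
  { intros a b Hab [<-|[<-|[]]]; simpl; [rewrite (Hlfm b Hab) | rewrite (Hmlf b Hab)]; auto. }
  assert (Hs0F : ~ In s0 F) by (intros [<-|[<-|[]]]; apply Hs0; assumption).
  assert (Hcl : forall v, closure adj (in_sub adj tV tE) (Cpx (vertex_weights v))).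
  { intro v. apply closure_in_sub. left. exists v. split; [apply tV_all|].
    exists (vertex_weights v). split; [reflexivity | apply vertex_weights_vertex]. }
  assert (Hne : Cpx (vertex_weights m) <> Cpx (vertex_weights s0)).
  { intro Heq. injection Heq as Heq. apply Hs0F.
    assert (Hm1 : vertex_weights s0 m <> 0).
    { rewrite <- Heq. destruct (vertex_weights_vertex m). lra. }
    rewrite <- (vertex_fun_supp (vertex_weights_vertex s0) Hm1). simpl; auto. }
  destruct (Hac _ _ (Hcl m) (Hcl s0) Hne) as [beta [B [Hb [Hb0 [Hb1 HB]]]]].
  destruct (arc_in_subgraph_supp Hb HB tE_sym HF) with (s := 1) as [g [Hg HgF]].
  - exists (vertex_weights m). split; [exact Hb0|].
    intros w Hw. rewrite (vertex_fun_supp (vertex_weights_vertex m) Hw). simpl; auto.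
  - split; lra.
  - rewrite Hb1 in Hg. injection Hg as <-. apply Hs0F, HgF.
    destruct (vertex_weights_vertex s0). lra.
Qed.

Section Positions.
Variable alpha : R -> point V.
Hypothesis Harc : arc_param adj alpha spine_arc.

Lemma pos_exists v : TmL_V tV tE v -> exists t, posA alpha v t.
Proof.
  intro Hv. assert (Hp : spine_arc (Cpx (vertex_weights v))).
  { apply closure_in_sub. left. exists v. split; [exact Hv|].
    exists (vertex_weights v). split; [reflexivity | apply vertex_weights_vertex]. }
  destruct (arc_surj Harc Hp) as [t [Ut Ht]]. exists t. split; [exact Ut|].
  rewrite Ht. exists (vertex_weights v). split; [reflexivity | apply vertex_weights_vertex].
Qed.

Lemma pos_unique v s t : posA alpha v s -> posA alpha v t -> s = t.
Proof. intros [Us Hs] [Ut Ht]. exact (arc_vtx_unique Harc Us Ut Hs Ht). Qed.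

Lemma pos_inj v w t : posA alpha v t -> posA alpha w t -> v = w.
Proof.
  intros [_ [f [Hf Hfv]]] [_ [g [Hg Hgw]]]. rewrite Hf in Hg. injection Hg as <-.
  apply (vertex_fun_supp Hgw). destruct Hfv. lra.
Qed.

Lemma pos_spine v t : posA alpha v t -> TmL_V tV tE v.
Proof. intros [Ut Hv]. exact (spine_arc_vertex (arc_mem Harc Ut) Hv). Qed.

Lemma ltA_pos a b s t : posA alpha a s -> posA alpha b t -> (ltA alpha a b <-> s < t).
Proof.
  intros Ha Hb. split.
  - intros [s' [t' [Ha' [Hb' Hlt]]]]. rewrite (pos_unique Ha Ha'), (pos_unique Hb Hb'). exact Hlt.
  - intro Hlt. exists s, t. auto.
Qed.

Lemma consecA_pos a b s t : posA alpha a s -> posA alpha b t -> s < t ->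
  no_pos_between alpha s t -> consecA tV tE alpha a b.
Proof.
  intros Ha Hb Hst Hno. split; [exact (pos_spine Ha)|]. split; [exact (pos_spine Hb)|].
  split; [exact (proj2 (ltA_pos Ha Hb) Hst)|].
  intros [w [Hw [Haw Hwb]]]. destruct (pos_exists Hw) as [r Hr].
  apply (Hno w r Hr). split; [apply (ltA_pos Ha Hr), Haw | apply (ltA_pos Hr Hb), Hwb].
Qed.

Lemma cls_spine u t : posA alpha u t -> cls tV tE alpha u (Some u).
Proof.
  intro Hu. pose proof Hu as [[Ht0 Ht1] _].
  destruct (Rle_lt_or_eq_dec 0 t Ht0) as [Hpos|<-].
  - left. destruct (arc_pred_vertex Harc spine_arc_edge_closed Hu Hpos)
      as [z [t' [Hz [Hlt Hno]]]].
    exists z. split; [exact (consecA_pos Hz Hu Hlt Hno) | now left].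
  - right. split; [|reflexivity]. split; [exact (pos_spine Hu)|].
    intros w Hw Hwu. destruct (pos_exists Hw) as [r Hr]. apply (ltA_pos Hu Hr).
    pose proof Hr as [[Hr0 _] _]. destruct (Rle_lt_or_eq_dec 0 r Hr0) as [|Hr0']; [assumption|].
    subst r. exfalso. exact (Hwu (pos_inj Hr Hu)).
Qed.

Lemma cls_leaf lf m t : leaf tV tE lf -> tE m lf -> posA alpha m t ->
  (exists m' t', posA alpha m' t' /\ t < t' /\ no_pos_between alpha t t' /\
                 cls tV tE alpha lf (Some m'))
  \/ (t = 1 /\ cls tV tE alpha lf None).
Proof.
  intros Hlf Hm Hmt. pose proof Hmt as [[_ Ht1] _].
  destruct (Rle_lt_or_eq_dec t 1 Ht1) as [Hlt| ->].
  - left. destruct (arc_succ_vertex Harc spine_arc_edge_closed Hmt Hlt)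
      as [m' [t' [Hm' [Htt' Hno]]]].
    exists m', t'. split; [exact Hm'|]. split; [exact Htt'|]. split; [exact Hno|].
    left. exists m. split; [exact (consecA_pos Hmt Hm' Htt' Hno) | right; auto].
  - right. split; [reflexivity|]. exists m. split; [|auto].
    split; [exact (pos_spine Hmt)|].
    intros w Hw Hwm. destruct (pos_exists Hw) as [r Hr]. apply (ltA_pos Hr Hmt).
    pose proof Hr as [[_ Hr1] _]. destruct (Rle_lt_or_eq_dec r 1 Hr1) as [|Hr1']; [assumption|].
    subst r. exfalso. exact (Hwm (pos_inj Hr Hmt)).
Qed.

Section Interval.
Hypothesis adj_lf : locally_finite adj.
Hypothesis T_arc_connected : arc_connected adj (closure adj (in_sub adj tV tE)).
Variables (c : V) (pc : R) (kw : option V) (hi : R).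
Hypothesis Hc : posA alpha c pc.
(* [hi] is the position of the spine vertex of the class [kw]; for [P^+] it lies beyond the arc. *)
Hypothesis Hhi : (kw = None /\ hi = 2) \/ (exists d, kw = Some d /\ posA alpha d hi).

Definition in_interval z :=
  exists kz, cls tV tE alpha z kz /\ key_le alpha (Some c) kz /\ key_le alpha kz kw.

Lemma key_lt_hi z s : posA alpha z s -> (key_lt alpha (Some z) kw <-> s < hi).
Proof.
  intro Hz. destruct Hhi as [[-> ->]|[d [-> Hd]]].
  - destruct Hz as [[_ Hs1] _]. simpl. split; [lra | auto].
  - exact (ltA_pos Hz Hd).
Qed.

Lemma in_interval_spine z s : posA alpha z s -> pc <= s < hi -> in_interval z.
Proof.
  intros Hz Hs. exists (Some z). split; [exact (cls_spine Hz)|]. split.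
  - destruct (Req_dec pc s) as [<-|Hne]; [left; f_equal; exact (pos_inj Hc Hz)|].
    right. apply (ltA_pos Hc Hz). lra.
  - right. apply (key_lt_hi Hz). lra.
Qed.

Lemma in_interval_leaf lf m s : leaf tV tE lf -> tE m lf -> posA alpha m s -> pc <= s < hi ->
  in_interval lf.
Proof.
  intros Hlf Hm Hms Hs.
  destruct (cls_leaf Hlf Hm Hms) as [[m' [t' [Hm' [Hst' [Hno Hcls]]]]]|[-> Hcls]].
  - exists (Some m'). split; [exact Hcls|]. split; [right; apply (ltA_pos Hc Hm'); lra|].
    destruct Hhi as [[-> _]|[d [-> Hd]]]; [right; exact I|].
    destruct (Rtotal_order t' hi) as [Hlt|[Heq|Hgt]].
    + right. apply (ltA_pos Hm' Hd), Hlt.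
    + left. subst t'. f_equal. exact (pos_inj Hm' Hd).
    + exfalso. exact (Hno d hi Hd ltac:(lra)).
  - exists None. split; [exact Hcls|]. split; [right; exact I|].
    destruct Hhi as [[-> _]|[d [-> [[_ Hd1] _]]]]; [left; reflexivity | lra].
Qed.

Lemma in_interval_of_sep E S L :
  (forall t z, unit_interval t -> t <= pc \/ hi <= t -> vtx_at (alpha t) z -> ~ inC adj S E z) ->
  (forall v w, In v S -> adj v w -> In w L) ->
  forall z, inC adj (S ++ L) E z -> in_interval z.
Proof.
  intros Hout HL z Hz.
  assert (HzS : inC adj S E z) by exact (inC_mono (incl_appl L (incl_refl S)) Hz).
  assert (Hinside : forall y s, posA alpha y s -> inC adj S E y -> pc < s < hi).
  { intros y s [Us Hy] HyC.
    destruct (Rle_dec s pc) as [Hs|Hs]; [exfalso; exact (Hout s y Us (or_introl Hs) Hy HyC)|].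
    destruct (Rle_dec hi s) as [Hs'|Hs']; [exfalso; exact (Hout s y Us (or_intror Hs') Hy HyC)|].
    lra. }
  destruct (classic (leaf tV tE z)) as [Hlf|Hnlf].
  - pose proof Hlf as [_ [m [Hzm _]]].
    pose proof (leaf_neighbour_spine T_arc_connected (spine_nonempty Harc) Hlf Hzm) as Hm.
    assert (HmS : ~ In m S).
    { intro HmS. apply (inC_notin Hz), in_or_app. right. exact (HL m z HmS (tE_adj (tE_sym Hzm))). }
    assert (HmC : inC adj S E m).
    { apply (inC_conn_avoid_back HzS), conn_avoid_reach.
      apply reach_step with z; [exact HmS | exact (tE_adj (tE_sym Hzm)) |].
      apply reach_refl, (inC_notin HzS). }
    destruct (pos_exists Hm) as [sm Hsm]. pose proof (Hinside m sm Hsm HmC).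
    apply (in_interval_leaf Hlf (tE_sym Hzm) Hsm). lra.
  - destruct (pos_exists (conj (tV_all z) Hnlf)) as [sz Hsz]. pose proof (Hinside z sz Hsz HzS).
    apply (in_interval_spine Hsz). lra.
Qed.

Lemma end_nbhd_in_interval t E : unit_interval t -> alpha t = Endp E -> pc < t < hi ->
  exists S, forall z, inC adj S E z -> in_interval z.
Proof.
  intros Ut HtE Ht.
  pose proof (arc_end Harc Ut HtE) as HE.
  assert (Honce : forall s, unit_interval s -> s <> t -> alpha s <> Endp E).
  { intros s Us Hst Hs. apply Hst, (arc_inj Harc Us Ut). congruence. }
  pose proof Hc as [[Hpc0 Hpc1] _].
  destruct (arc_compact_sep Harc HE (lo := 0) (hi := pc)) as [S1 HS1]; [lra | lra |
    intros s Hs; apply Honce; [split |]; lra |].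
  assert (HS2 : exists S2, forall s z, hi <= s <= 1 -> vtx_at (alpha s) z -> ~ inC adj S2 E z).
  { destruct (Rle_dec hi 1).
    - apply (arc_compact_sep Harc HE); [lra | lra |]. intros s Hs. apply Honce; [split |]; lra.
    - exists []. intros s z Hs. lra. }
  destruct HS2 as [S2 HS2].
  destruct (neighbours_list (S1 ++ S2) adj_lf) as [L HL].
  exists ((S1 ++ S2) ++ L). apply (in_interval_of_sep (L := L)); [|exact HL].
  intros s z Us [Hs|Hs] Hz HzC.
  - apply (HS1 s z ltac:(destruct Us; lra) Hz). exact (inC_mono (incl_appl S2 (incl_refl S1)) HzC).
  - apply (HS2 s z ltac:(destruct Us; lra) Hz). exact (inC_mono (incl_appr S1 (incl_refl S2)) HzC).
Qed.

Lemma interval_sweep u1 s0 u2 s1 : posA alpha u1 s0 -> pc <= s0 -> posA alpha u2 s1 ->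
  s0 < s1 -> s1 < hi -> reach in_interval u1 u2.
Proof.
  intros Hu1 Hs0 Hu2 Hs01 Hs1.
  set (X := reach in_interval u1).
  assert (HX : forall a b, X a -> adj a b -> in_interval b -> X b).
  { intros a b Ha Hab Hb. exact (reach_snoc Ha Hab Hb). }
  pose proof Hu1 as [Us0 [f0 [Hf0 Hf0u]]]. pose proof Hu2 as [Us1 [f1 [Hf1 Hf1u]]].
  assert (Hstart : touches X (Cpx f0)).
  { exists u1. split; [destruct Hf0u; lra | apply reach_refl, (in_interval_spine Hu1); lra]. }
  assert (Hsweep : forall s, s0 <= s <= s1 -> touches X (alpha s)).
  { apply real_induction; [lra | rewrite Hf0; exact Hstart |].
    intros t Ht Hleft. assert (Ut : unit_interval t) by (destruct Us0, Us1; split; lra).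
    assert (Hnear : t <> s0 -> forall d, 0 < d ->
              exists s, unit_interval s /\ Rabs (t - s) < d /\ touches X (alpha s)).
    { intros Hts0 d Hd.
      destruct (exists_left_near (lo := s0) (t := t) ltac:(lra) Hd) as [s [Hs Hts]].
      exists s. split; [destruct Us0, Ut; split; lra|].
      split; [apply Rabs_lt_between; lra | apply Hleft, Hs]. }
    enough (Hopen : exists d, 0 < d /\
              forall s, unit_interval s -> Rabs (t - s) < d -> touches X (alpha s)).
    { destruct Hopen as [d [Hd Hopen]]. exists d. split; [exact Hd|]. intros s Hs Hss1.
      apply Hopen; [destruct Us0, Us1; split; lra | apply Rabs_lt_between; lra]. }
    destruct (alpha t) as [f|E] eqn:Htp.
    - apply (touches_open Harc Ut Htp). destruct (Req_dec t s0) as [->|Hts0].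
      + rewrite Hf0 in Htp. injection Htp as <-. exact Hstart.
      + apply (touches_limit_cpx Harc HX Ut Htp); [|exact (Hnear Hts0)].
        intros w Hw. apply (in_interval_spine (s := t)); [split; [exact Ut | exists f; auto] | lra].
    - assert (Hts0 : t <> s0) by (intros ->; congruence).
      destruct (end_nbhd_in_interval Ut Htp) as [S HS]; [lra|].
      exact (touches_limit_end Harc HX Ut Htp HS (Hnear Hts0)). }
  pose proof (Hsweep s1 ltac:(lra)) as Hend. rewrite Hf1 in Hend.
  destruct Hend as [z [Hz Xz]]. rewrite (vertex_fun_supp Hf1u Hz) in Xz. exact Xz.
Qed.

Lemma class_spine_rep x a : cls tV tE alpha x (Some a) -> ltA alpha c a ->
  key_lt alpha (Some a) kw ->
  exists u su, posA alpha u su /\ pc <= su < hi /\ reach in_interval x u.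
Proof.
  intros Hx Hca Hakw.
  assert (Hxin : in_interval x) by (exists (Some a); split; [exact Hx | split; right; assumption]).
  destruct (pos_exists (cls_key_spine Hx)) as [pa Hpa].
  pose proof (proj1 (ltA_pos Hc Hpa) Hca). pose proof (proj1 (key_lt_hi Hpa) Hakw).
  assert (Hxa : x = a -> exists u su, posA alpha u su /\ pc <= su < hi /\ reach in_interval x u).
  { intros ->. exists a, pa. split; [exact Hpa|]. split; [lra | apply reach_refl, Hxin]. }
  destruct Hx as [[a' [Hcons [Hxa'|[Hlf Hedge]]]]|[_ Hxa']]; try exact (Hxa Hxa').
  (* [x] is a leaf at the predecessor [a'] of [a], which cannot lie below [c] *)
  destruct Hcons as [Ha' [_ [Ha'a Hno]]].
  destruct (pos_exists Ha') as [pa' Hpa']. pose proof (proj1 (ltA_pos Hpa' Hpa) Ha'a).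
  assert (Hpc : pc <= pa').
  { apply Rnot_lt_le. intro Hlt. apply Hno. exists c.
    split; [exact (pos_spine Hc)|]. split; [apply (ltA_pos Hpa' Hc); lra | exact Hca]. }
  exists a', pa'. split; [exact Hpa'|]. split; [lra|].
  apply reach_step with a'; [exact Hxin | exact (tE_adj (tE_sym Hedge)) |].
  apply reach_refl, (in_interval_spine Hpa'). lra.
Qed.

Lemma interval_reach x y kx ky :
  cls tV tE alpha x kx -> key_lt alpha (Some c) kx -> key_lt alpha kx kw ->
  cls tV tE alpha y ky -> key_lt alpha (Some c) ky -> key_lt alpha ky kw ->
  reach in_interval x y.
Proof.
  intros Hx Hcx Hxw Hy Hcy Hyw.
  destruct kx as [a|]; [|destruct Hxw]. destruct ky as [b|]; [|destruct Hyw].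
  destruct (class_spine_rep Hx Hcx Hxw) as [ux [sx [Hux [Hsx Hrx]]]].
  destruct (class_spine_rep Hy Hcy Hyw) as [uy [sy [Huy [Hsy Hry]]]].
  apply (reach_trans Hrx). apply (fun H => reach_trans H (reach_sym Hry)).
  destruct (Rtotal_order sx sy) as [Hlt|[<-|Hgt]].
  - exact (interval_sweep Hux (proj1 Hsx) Huy Hlt (proj2 Hsy)).
  - rewrite (pos_inj Hux Huy). apply reach_refl, (reach_inr Hry).
  - apply reach_sym. exact (interval_sweep Huy (proj1 Hsy) Hux Hgt (proj2 Hsx)).
Qed.

End Interval.

End Positions.

End Graph.

Theorem lemma3p6 (V : Type) (adj : V -> V -> Prop)
  (tV : V -> Prop) (tE : V -> V -> Prop) (alpha : R -> point V)
  (v w x y : V) (kv kw kx ky : option V) :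
  simple_graph adj -> locally_finite adj -> graph_connected adj ->
  spanning_top_caterpillar adj tV tE ->
  arc_param adj alpha (closure adj (in_sub adj (TmL_V tV tE) (TmL_E tV tE))) ->
  cls tV tE alpha v kv -> cls tV tE alpha w kw -> key_le alpha kv kw ->
  cls tV tE alpha x kx -> key_lt alpha kv kx -> key_lt alpha kx kw ->
  cls tV tE alpha y ky -> key_lt alpha kv ky -> key_lt alpha ky kw ->
  exists l : list V, walk adj x l /\ last l x = y /\
    forall z, In z (x :: l) ->
      exists kz, cls tV tE alpha z kz /\ key_le alpha kv kz /\ key_le alpha kz kw.
Proof.
  intros [Hsym Hirr] Hlf _ [[[[HtEs [HtEa _]] _] [_ [Hac _]]] HtV] Harc
    Hv Hw _ Hx Hvx Hxw Hy Hvy Hyw.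
  destruct kv as [c|]; [|destruct Hvx].
  destruct (pos_exists Harc (cls_key_spine Hv)) as [pc Hc].
  assert (Hhi : exists hi, (kw = None /\ hi = 2) \/ (exists d, kw = Some d /\ posA alpha d hi)).
  { destruct kw as [d|]; [|exists 2; left; auto].
    destruct (pos_exists Harc (cls_key_spine Hw)) as [hi Hd]. exists hi. right. eauto. }
  destruct Hhi as [hi Hhi].
  pose proof (interval_reach Hsym Hirr HtV HtEs HtEa Harc Hlf Hac Hc Hhi Hx Hvx Hxw Hy Hvy Hyw)
    as Hreach.
  destruct (reach_walk Hreach) as [l [Hwalk [Hlast Hin]]].
  exists l. auto.
Qed.
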